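(* Let $(\Gamma,\psi)$ be an $H$-asymptotic couple with asymptotic integration. Suppose $S\subseteq\Gamma$ is a nonempty convex set without a greatest element such that either $S\subseteq(\Gamma^{>})'$ or $S\subseteq(\Gamma^{<})'$, and $S$ has the derived yardstick property. Then $\int S:=\{\int\sigma:\sigma\in S\}\subseteq\Gamma$ is nonempty, convex, has no greatest element, and has the yardstick property.
   Context: An asymptotic couple is a pair $(\Gamma,\psi)$ with $\Gamma$ an ordered abelian group and $\psi:\Gamma\setminus\{0\}\to\Gamma$ such that for all nonzero $\alpha,\beta$: $\alpha+\beta\ne0\Rightarrow\psi(\alpha+\beta)\ge\min(\psi(\alpha),\psi(\beta))$; $\psi(k\alpha)=\psi(\alpha)$ for $k\in\mathbb{Z}\setminus\{0\}$; $\alpha>0\Rightarrow\alpha+\psi(\alpha)>\psi(\beta)$. It is $H$-asymptotic (of $H$-type) if $0<\alpha\le\beta\Rightarrow\psi(\alpha)\ge\psi(\beta)$. Write $\gamma'=\gamma+\psi(\gamma)$ for $\gamma\ne0$, $(\Gamma^{>})'=\{\gamma':\gamma>0\}$, $(\Gamma^{<})'=\{\gamma':\gamma<0\}$. Asymptotic integration: every $\alpha\in\Gamma$ equals $\gamma'$ for some $\gamma\ne0$; then such $\gamma$ is unique and is denoted $\int\alpha$. Define $s(\alpha)=\psi(\int\alpha)$, and the contraction $\chi(\alpha)=\int\psi(\alpha)$ for $\alpha\ne0$, $\chi(0)=0$. A nonempty convex $S\subseteq\Gamma$ without greatest element has the yardstick property if there is $\beta\in S$ with $\gamma-\chi(\gamma)\in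 S$ for all $\gamma\in S$, $\gamma>\beta$. A nonempty convex $S\subseteq\Gamma$ without greatest element with $S\subseteq(\Gamma^{>})'$ or $S\subseteq(\Gamma^{<})'$ has the derived yardstick property if there is $\beta\in S$ such that $\gamma-\int s(\gamma)\in S$ and $\gamma-\int s(\gamma)>\beta$ for every $\gamma\in S$ with $\gamma>\beta$. *)

From HB Require Import structures.
From mathcomp Require Import all_boot all_order all_algebra.
From Stdlib Require Import ClassicalEpsilon.
Set Implicit Arguments. Unset Strict Implicit. Unset Printing Implicit Defensive.
Import Order.TTheory GRing.Theory Num.Theory.
Local Open Scope ring_scope.

Definition ordered_abelian_group (G : porderZmodType) : Prop :=
  (forall x y : G, (x <= y) || (y <= x)) /\
  (forall x y z : G, x <= y -> x + z <= y + z).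

Section AC.
Variables (G : porderZmodType) (psi : G -> G).
(* psi is a total function; its value at 0 is irrelevant (psi is only
   used on nonzero arguments). *)

Definition asymptotic_couple : Prop :=
  ordered_abelian_group G /\
  (forall a b : G, a != 0 -> b != 0 -> a + b != 0 ->
      Num.min (psi a) (psi b) <= psi (a + b)) /\
  (forall (a : G) (k : int), a != 0 -> k != 0 -> psi (a *~ k) = psi a) /\
  (forall a b : G, 0 < a -> b != 0 -> psi b < a + psi a).

Definition H_asymptotic : Prop :=
  forall a b : G, 0 < a -> a <= b -> psi b <= psi a.

Definition derivAC (g : G) : G := g + psi g.

Definition has_asymptotic_integration : Prop :=
  forall a : G, exists g : G, g != 0 /\ derivAC g = a.

Definition pos_derivs (a : G) : Prop := exists g : G, 0 < g /\ a = derivAC g.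
Definition neg_derivs (a : G) : Prop := exists g : G, g < 0 /\ a = derivAC g.

(* \int a : the (unique, under asymptotic integration) nonzero g with g' = a *)
Definition integ (a : G) : G :=
  epsilon (inhabits 0) (fun g : G => g != 0 /\ derivAC g = a).

Definition s_fun (a : G) : G := psi (integ a).

Definition contraction (a : G) : G := if a == 0 then 0 else integ (psi a).

Definition convex_set (S : G -> Prop) : Prop :=
  forall a b c : G, S a -> S c -> a <= b -> b <= c -> S b.

Definition nonempty_set (S : G -> Prop) : Prop := exists a, S a.

Definition no_greatest (S : G -> Prop) : Prop :=
  forall a, S a -> exists b, S b /\ a < b.

Definition yardstick (S : G -> Prop) : Prop :=
  exists beta, S beta /\
    forall g, S g -> beta < g -> S (g - contraction g).

Definition derived_yardstick (S : G -> Prop) : Prop :=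
  exists beta, S beta /\
    forall g, S g -> beta < g ->
      S (g - integ (s_fun g)) /\ beta < g - integ (s_fun g).

Definition integ_set (S : G -> Prop) : G -> Prop :=
  fun g => exists sigma, S sigma /\ g = integ sigma.

End AC.

(* In any asymptotic couple gamma |-> gamma' is strictly increasing on the
   nonzero elements, so under asymptotic
   integration [integ] is an order isomorphism from Gamma onto Gamma minus 0.
   It therefore transports nonemptiness, convexity (the sign condition keeps 0
   out of the image) and the absence of a greatest element.  The yardstick
   property comes from the identity  int (a - int s(a)) = int a - chi(int a):
   with g = int a and c = int psi(g) one has c < 0, hence
   psi(-c) = psi(g) - c > psi(g), so the ultrametric inequality for psi is an
   equality, psi(g - c) = psi(g), i.e. (g - c)' = g' - c. *)
From mathcomp Require Import all_boot all_order all_algebra.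
From Stdlib Require Import ClassicalEpsilon.
Import Order.TTheory GRing.Theory Num.Theory.
Local Open Scope ring_scope.

Section OrderedAbelianGroup.
Variable G : porderZmodType.
Hypothesis ler_add_mono : forall x y z : G, x <= y -> x + z <= y + z.

Lemma lerD2r (x y z : G) : (x + z <= y + z) = (x <= y).
Proof.
apply/idP/idP => [|/ler_add_mono //].
by move/(ler_add_mono _ _ (- z)); rewrite !addrK.
Qed.

Lemma ltrD2r (x y z : G) : (x + z < y + z) = (x < y).
Proof. by rewrite !lt_def lerD2r (inj_eq (addIr z)). Qed.

Lemma lerD2l (x y z : G) : (z + x <= z + y) = (x <= y).
Proof. by rewrite ![z + _]addrC lerD2r. Qed.

Lemma ltrD2l (x y z : G) : (z + x < z + y) = (x < y).
Proof. by rewrite ![z + _]addrC ltrD2r. Qed.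

Lemma ltrDl (x y : G) : (x < x + y) = (0 < y).
Proof. by rewrite -{1}[x]addr0 ltrD2l. Qed.

Lemma subr_gt0 (x y : G) : (0 < y - x) = (x < y).
Proof. by rewrite -[LHS](ltrD2r _ _ x) add0r subrK. Qed.

Lemma oppr_gt0 (x : G) : (0 < - x) = (x < 0).
Proof. by rewrite -[- x]add0r subr_gt0. Qed.

Hypothesis le_total : total (<=%O : rel G).

Section AsymptoticCouple.
Variable psi : G -> G.
Hypothesis psiD_ge_min : forall a b : G, a != 0 -> b != 0 -> a + b != 0 ->
  Num.min (psi a) (psi b) <= psi (a + b).
Hypothesis psiMz : forall (a : G) (k : int), a != 0 -> k != 0 ->
  psi (a *~ k) = psi a.
Hypothesis psi_lt_deriv : forall a b : G, 0 < a -> b != 0 -> psi b < derivAC psi a.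
Hypothesis integrable : has_asymptotic_integration psi.

Local Notation integ := (integ psi).
Local Notation deriv := (derivAC psi).

Lemma psiN {a : G} : a != 0 -> psi (- a) = psi a.
Proof. by move=> a0; rewrite -mulrN1z psiMz. Qed.

Lemma addr_neq0_psi (a b : G) : a != 0 -> psi a != psi b -> a + b != 0.
Proof. by move=> a0; apply: contra => /eqP/addr0_eq <-; rewrite psiN. Qed.

Lemma psiD_eq_min (a b : G) : a != 0 -> b != 0 -> psi a < psi b ->
  psi (a + b) = psi a.
Proof.
move=> a0 b0 lt_ab.
have ab0 : a + b != 0 by rewrite addr_neq0_psi // lt_eqF.
apply/le_anti/andP; split; last by rewrite -(min_l (ltW lt_ab)) psiD_ge_min.
have := @psiD_ge_min (a + b) (- b) ab0; rewrite oppr_eq0 addrK psiN //.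
rewrite minElt; case: ifP => _ /(_ b0 a0) // le_ba.
by have := lt_le_trans lt_ab le_ba; rewrite ltxx.
Qed.

Lemma deriv_lt (a b : G) : a != 0 -> b != 0 -> a < b -> deriv a < deriv b.
Proof.
move=> a0 b0 lt_ab; rewrite /derivAC.
have [le_psi | lt_psi] := comparable_leP (le_total (psi a) (psi b)).
  by apply: lt_le_trans (_ : b + psi a <= _); rewrite ?ltrD2r ?lerD2l.
have gap_gt0 : 0 < b - a by rewrite subr_gt0.
have psi_gap : psi (b - a) = psi b by rewrite psiD_eq_min ?oppr_eq0 ?psiN.
have -> : b + psi b = a + deriv (b - a).
  by rewrite /derivAC psi_gap addrA [a + _]addrC subrK.
by rewrite ltrD2l psi_lt_deriv.
Qed.

Lemma deriv_le (a b : G) : a != 0 -> b != 0 -> (deriv a <= deriv b) = (a <= b).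
Proof.
move=> a0 b0; have [le_ab|lt_ba] := comparable_leP (le_total a b).
  have [-> | ne_ab] := eqVneq a b; first by rewrite !lexx.
  by rewrite ltW ?deriv_lt // lt_neqAle ne_ab.
by rewrite lt_geF ?deriv_lt.
Qed.

Lemma integ_neq0 (a : G) : integ a != 0.
Proof. exact: (epsilon_spec _ _ (integrable a)).1. Qed.

Lemma deriv_integ (a : G) : deriv (integ a) = a.
Proof. exact: (epsilon_spec _ _ (integrable a)).2. Qed.

Lemma integ_deriv {g : G} : g != 0 -> integ (deriv g) = g.
Proof.
move=> g0; apply/le_anti.
rewrite -(deriv_le _ _ (integ_neq0 _) g0) -(deriv_le _ _ g0 (integ_neq0 _)).
by rewrite deriv_integ lexx.
Qed.

Lemma integ_le (a b : G) : (integ a <= integ b) = (a <= b).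
Proof. by rewrite -(deriv_le _ _ (integ_neq0 a) (integ_neq0 b)) !deriv_integ. Qed.

Lemma integ_lt (a b : G) : (integ a < integ b) = (a < b).
Proof. by rewrite !lt_def integ_le (can_eq deriv_integ). Qed.

Lemma integ_psi_lt0 {g : G} : g != 0 -> integ (psi g) < 0.
Proof.
move=> g0; have [// | ge0] := comparable_ltP (le_total (integ (psi g)) 0).
have gt0 : 0 < integ (psi g) by rewrite lt_def integ_neq0.
by have := psi_lt_deriv _ _ gt0 g0; rewrite deriv_integ ltxx.
Qed.

Lemma psi_lt_psi_integ_psi {g : G} : g != 0 -> psi g < psi (integ (psi g)).
Proof.
move=> g0; set c := integ (psi g).
have -> : psi c = psi g - c.
  by rewrite -[in RHS](deriv_integ (psi g)) -/c /derivAC [c + _]addrC addrK.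
by rewrite ltrDl oppr_gt0 integ_psi_lt0.
Qed.

Lemma psi_sub_integ_psi {g : G} : g != 0 ->
  g - integ (psi g) != 0 /\ psi (g - integ (psi g)) = psi g.
Proof.
move=> g0; have c0 := integ_neq0 (psi g).
have lt_psi := psi_lt_psi_integ_psi g0; rewrite -(psiN c0) in lt_psi.
split; first by rewrite addr_neq0_psi // (lt_eqF lt_psi).
by rewrite psiD_eq_min ?oppr_eq0.
Qed.

Lemma integ_sub_integ_sfun (a : G) :
  integ (a - integ (s_fun psi a)) = integ a - contraction psi (integ a).
Proof.
rewrite /contraction (negbTE (integ_neq0 a)) /s_fun.
have [neq0 psi_eq] := psi_sub_integ_psi (integ_neq0 a).
rewrite -(integ_deriv neq0) /derivAC psi_eq addrAC.
by rewrite -/(derivAC psi (integ a)) deriv_integ.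
Qed.

Lemma integ_gt0 {a : G} : pos_derivs psi a -> 0 < integ a.
Proof. by case=> g [g_gt0 ->]; rewrite integ_deriv // gt_eqF. Qed.

Lemma integ_lt0 {a : G} : neg_derivs psi a -> integ a < 0.
Proof. by case=> g [g_lt0 ->]; rewrite integ_deriv // lt_eqF. Qed.

Lemma convex_integ_set (S : G -> Prop) : convex_set S ->
  (forall a, S a -> pos_derivs psi a) \/ (forall a, S a -> neg_derivs psi a) ->
  convex_set (integ_set psi S).
Proof.
move=> S_convex S_sign _ y _ [a [Sa ->]] [c [Sc ->]] le_ay le_yc.
have y0 : y != 0.
  case: S_sign => [S_pos | S_neg].
    by rewrite gt_eqF // (lt_le_trans (integ_gt0 (S_pos _ Sa)) le_ay).
  by rewrite lt_eqF // (le_lt_trans le_yc (integ_lt0 (S_neg _ Sc))).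
exists (deriv y); split; last by rewrite integ_deriv.
by apply: (S_convex a _ c); rewrite // -integ_le integ_deriv.
Qed.

Lemma no_greatest_integ_set (S : G -> Prop) :
  no_greatest S -> no_greatest (integ_set psi S).
Proof.
move=> S_ng _ [a [Sa ->]]; have [b [Sb lt_ab]] := S_ng a Sa.
by exists (integ b); split; [exists b | rewrite integ_lt].
Qed.

Lemma yardstick_integ_set (S : G -> Prop) :
  derived_yardstick psi S -> yardstick psi (integ_set psi S).
Proof.
move=> [beta [Sbeta S_yard]]; exists (integ beta); split; first by exists beta.
move=> _ [a [Sa ->]]; rewrite integ_lt => lt_beta_a.
exists (a - integ (s_fun psi a)); split; first exact: (S_yard a Sa lt_beta_a).1.
by rewrite integ_sub_integ_sfun.
Qed.

End AsymptoticCouple.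
End OrderedAbelianGroup.

Theorem proposition3p19 (G : porderZmodType) (psi : G -> G) (S : G -> Prop) :
  asymptotic_couple psi ->
  H_asymptotic psi ->
  has_asymptotic_integration psi ->
  nonempty_set S -> convex_set S -> no_greatest S ->
  ((forall a, S a -> pos_derivs psi a) \/ (forall a, S a -> neg_derivs psi a)) ->
  derived_yardstick psi S ->
  nonempty_set (integ_set psi S) /\ convex_set (integ_set psi S) /\
  no_greatest (integ_set psi S) /\ yardstick psi (integ_set psi S).
Proof.
move=> [[le_total lerD] [psiD_ge_min [psiMz psi_lt_deriv]]] _ integrable [a Sa]
  S_convex S_ng S_sign S_yard.
split; first by exists (integ psi a), a.
split; first exact: convex_integ_set.
split; first exact: no_greatest_integ_set.
exact: yardstick_integ_set.
Qed.
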